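(* Let $K>0$, $r=1/K$, and let $p:[0,L]\to\mathbb{R}^d$ be the arc length parametrisation of an open equilateral polygon of length $L$ with vertices $p(a_0),\dots,p(a_n)$, $0=a_0<\dots<a_n=L$, such that $\mathrm{maxCurv}_2(p)\le K$ and $KL\le\pi/2$. Suppose $p$ touches the sphere $\partial B_r(c)$ tangentially at its endpoint $p(0)$, i.e. $|p(0)-c|=r$ and the direction of the first edge $p(a_1)-p(a_0)$ is orthogonal to $p(0)-c$. Then $|p(a_k)-c|>r$ for all $k=1,\dots,n$.
   Context: For an open polygon $p$ with vertices $y_k=p(a_k)$, the discrete curvature at an interior vertex $y_k$ ($1\le k\le n-1$) is $\kappa_{d,2}(y_{k-1},y_k,y_{k+1})=\frac{\phi_k}{(|y_{k-1}-y_k|+|y_{k+1}-y_k|)/2}$, where $\phi_k=\measuredangle(y_k-y_{k-1},y_{k+1}-y_k)\in[0,\pi]$ is the exterior angle at $y_k$; $\mathrm{maxCurv}_2(p)$ is the maximum of $\kappa_{d,2}$ over all interior vertices. *)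

From Stdlib Require Import Reals Lra.
Open Scope R_scope.

(* Points of R^d are represented as functions nat -> R, of which only the
   coordinates 0..d-1 are relevant. *)
Definition vec := nat -> R.

Definition vsub (x y : vec) : vec := fun i => x i - y i.

Fixpoint dot (d : nat) (x y : vec) : R :=
  match d with
  | O => 0
  | S d' => dot d' x y + x d' * y d'
  end.

Definition vnorm (d : nat) (x : vec) : R := sqrt (dot d x x).

Definition vangle (d : nat) (u v : vec) : R :=
  acos (dot d u v / (vnorm d u * vnorm d v)).

Definition kappa_d2 (d : nat) (ym y yp : vec) : R :=
  vangle d (vsub y ym) (vsub yp y)
  / ((vnorm d (vsub ym y) + vnorm d (vsub yp y)) / 2).

Definition maxCurv2_le (d n : nat) (y : nat -> vec) (K : R) : Prop :=
  forall k : nat, (1 <= k <= n - 1)%nat ->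
    kappa_d2 d (y (k - 1)%nat) (y k) (y (k + 1)%nat) <= K.

(* Write h = L/n for the edge length, beta = K h, e_m for the m-th edge and
   w = y_0 - c for the outward normal at the touching point.  The proof compares
   the polygon with the planar polygon of edge h turning by exactly beta at each
   vertex, whose vertices (X_m, Y_m) are explicit trigonometric sums.
   1. Vector algebra: Cauchy-Schwarz, a Bessel inequality for two orthogonal
      vectors, and the triangle inequality for angles between vectors.
   2. Curvature at most K forces each turning angle to be at most beta; composing
      angles, angle(e_0, e_m) <= m beta, so the tangential and normal components
      of y_m - y_0 dominate those of the comparison polygon: h X_m and -r Y_m.
   3. Trigonometry: for m beta <= pi/2 the comparison vertex satisfies X_m >= 0,
      Y_m <= r and lies strictly outside the circle X^2 + Y^2 = 2 r Y.
   4. A point whose tangential and normal components dominate such a comparison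
      point lies strictly outside the sphere; this gives the corollary. *)

From Stdlib Require Import Reals Lra Lia Psatz.
Open Scope R_scope.

Lemma dot_ext d x x' z z' : (forall i, x i = x' i) -> (forall i, z i = z' i) ->
  dot d x z = dot d x' z'.
Proof. intros Hx Hz; induction d; simpl; [reflexivity | rewrite IHd, Hx, Hz; reflexivity]. Qed.

Lemma dot_sym d x z : dot d x z = dot d z x.
Proof. induction d; simpl; [reflexivity | rewrite IHd; ring]. Qed.

Lemma dot_nonneg d x : 0 <= dot d x x.
Proof. induction d; simpl; [lra | nra]. Qed.

Lemma dot_zero d x z : (forall i, x i = 0) -> dot d x z = 0.
Proof. intros Hx; induction d; simpl; [reflexivity | rewrite IHd, Hx; ring]. Qed.

Lemma dot_addl d x y z : dot d (fun i => x i + y i) z = dot d x z + dot d y z.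
Proof. induction d; simpl; [ring | rewrite IHd; ring]. Qed.

Lemma dot_comb2 d x y p q :
  dot d (fun i => p * x i + q * y i) (fun i => p * x i + q * y i)
  = p * p * dot d x x + 2 * p * q * dot d x y + q * q * dot d y y.
Proof. induction d; simpl; [ring | rewrite IHd; ring]. Qed.

Lemma dot_comb3 d x y z p q s p' q' s' :
  dot d (fun i => p * x i + q * y i + s * z i) (fun i => p' * x i + q' * y i + s' * z i)
  = p*p'*dot d x x + p*q'*dot d x y + p*s'*dot d x z
  + q*p'*dot d y x + q*q'*dot d y y + q*s'*dot d y z
  + s*p'*dot d z x + s*q'*dot d z y + s*s'*dot d z z.
Proof. induction d; simpl; [ring | rewrite IHd; ring]. Qed.

Lemma vnorm_sq d x : vnorm d x ^ 2 = dot d x x.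
Proof. unfold vnorm; rewrite <- Rsqr_pow2; apply Rsqr_sqrt, dot_nonneg. Qed.

Lemma vnorm_vsub_swap d a b : vnorm d (vsub a b) = vnorm d (vsub b a).
Proof.
  unfold vnorm; f_equal.
  induction d; simpl; [reflexivity | rewrite IHd; unfold vsub; ring].
Qed.

Lemma cauchy_schwarz d x y : (dot d x y) ^ 2 <= dot d x x * dot d y y.
Proof.
  pose proof (dot_nonneg d x) as Hx. pose proof (dot_nonneg d y) as Hy.
  destruct (Req_dec (dot d y y) 0) as [Hy0 | Hy0].
  - (* then x.y = 0, as |x - t y|^2 >= 0 for all t *)
    pose proof (dot_nonneg d (fun i => 1 * x i + (- dot d x y) * y i)) as H.
    pose proof (dot_nonneg d (fun i => (- dot d x y) * x i + (dot d x x) * y i)) as H'.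
    rewrite dot_comb2, Hy0 in H, H'. rewrite Hy0. nra.
  - pose proof (dot_nonneg d (fun i => dot d y y * x i + (- dot d x y) * y i)) as H.
    rewrite dot_comb2 in H.
    assert (0 <= dot d y y * (dot d x x * dot d y y - (dot d x y) ^ 2)) by nra.
    nra.
Qed.

Lemma cauchy_schwarz_lower d x y : - (sqrt (dot d x x) * sqrt (dot d y y)) <= dot d x y.
Proof.
  rewrite <- sqrt_mult by apply dot_nonneg.
  assert (Rabs (dot d x y) <= sqrt (dot d x x * dot d y y)).
  { rewrite <- sqrt_Rsqr_abs. apply sqrt_le_1_alt.
    rewrite Rsqr_pow2. apply cauchy_schwarz. }
  pose proof (Rle_abs (- dot d x y)). rewrite Rabs_Ropp in *. lra.
Qed.

(* Bessel's inequality for two orthogonal directions a and b: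
   (x.a)^2/|a|^2 + (x.b)^2/|b|^2 <= |x|^2, with the denominators cleared. *)
Lemma bessel2 d x a b : dot d a b = 0 -> 0 < dot d a a -> 0 < dot d b b ->
  (dot d x a) ^ 2 * dot d b b + (dot d x b) ^ 2 * dot d a a
  <= dot d x x * dot d a a * dot d b b.
Proof.
  intros Hab Ha Hb.
  pose proof (dot_nonneg d (fun i => (dot d a a * dot d b b) * x i
     + (- (dot d x a * dot d b b)) * a i + (- (dot d x b * dot d a a)) * b i)) as H.
  rewrite dot_comb3, (dot_sym d a x), (dot_sym d b x), (dot_sym d b a), Hab in H.
  assert (0 <= dot d a a * dot d b b * (dot d x x * dot d a a * dot d b b
           - ((dot d x a) ^ 2 * dot d b b + (dot d x b) ^ 2 * dot d a a))) by nra.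
  assert (0 < dot d a a * dot d b b) by nra.
  nra.
Qed.

(* Triangle inequality for angles, angle(a,c) <= angle(a,b) + angle(b,c), in the
   form cos(theta_ab + theta_bc) <= cos(theta_ac) with all norms cleared.  It is
   Cauchy-Schwarz for the components of a and c orthogonal to b. *)
Lemma angle_triangle d a b c : 0 < dot d b b ->
  dot d a b * dot d b c - sqrt (dot d b b * dot d a a - (dot d a b) ^ 2)
     * sqrt (dot d b b * dot d c c - (dot d b c) ^ 2) <= dot d b b * dot d a c.
Proof.
  intros Hb.
  set (B := dot d b b) in *.
  pose proof (cauchy_schwarz_lower d (fun i => B * a i + (- dot d a b) * b i + 0 * c i)
                         (fun i => 0 * a i + (- dot d c b) * b i + B * c i)) as H.
  rewrite !dot_comb3, (dot_sym d b a), (dot_sym d c a), (dot_sym d c b) in H.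
  fold B in H.
  assert (Ea : B * B * dot d a a + B * - dot d a b * dot d a b + B * 0 * dot d a c +
        - dot d a b * B * dot d a b + - dot d a b * - dot d a b * B + - dot d a b * 0 * dot d b c +
        0 * B * dot d a c + 0 * - dot d a b * dot d b c + 0 * 0 * dot d c c
        = B * (B * dot d a a - (dot d a b) ^ 2)) by ring.
  assert (Ec : 0 * 0 * dot d a a + 0 * - dot d b c * dot d a b + 0 * B * dot d a c +
        - dot d b c * 0 * dot d a b + - dot d b c * - dot d b c * B + - dot d b c * B * dot d b c +
        B * 0 * dot d a c + B * - dot d b c * dot d b c + B * B * dot d c c
        = B * (B * dot d c c - (dot d b c) ^ 2)) by ring.
  rewrite Ea, Ec in H.
  pose proof (cauchy_schwarz d a b) as CSab. pose proof (cauchy_schwarz d b c) as CSbc.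
  fold B in CSab, CSbc.
  rewrite !sqrt_mult in H by nra.
  assert (Hs : sqrt B * sqrt B = B) by (apply sqrt_sqrt; lra).
  set (S1 := sqrt (B * dot d a a - dot d a b ^ 2)) in *.
  set (S2 := sqrt (B * dot d c c - dot d b c ^ 2)) in *.
  replace (sqrt B * S1 * (sqrt B * S2)) with ((sqrt B * sqrt B) * (S1 * S2)) in H by ring.
  rewrite Hs in H.
  apply Rmult_le_reg_l with B; lra.
Qed.

(* Angles between vectors of a common length h are measured through the bound
   h^2 cos t <= u.v, meaning angle(u, v) <= t. *)

Lemma sine_from_cosine_bound s P t : 0 <= s -> 0 <= t <= PI / 2 -> s * cos t <= P ->
  sqrt (s * s - P ^ 2) <= s * sin t.
Proof.
  intros Hs Ht HP.
  assert (Hc : 0 <= cos t) by (apply cos_ge_0; lra).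
  assert (Hsn : 0 <= sin t) by (apply sin_ge_0; lra).
  pose proof (sin2_cos2 t) as E. unfold Rsqr in E.
  rewrite <- (sqrt_pow2 (s * sin t)) by nra.
  apply sqrt_le_1_alt.
  assert ((s * cos t) ^ 2 <= P ^ 2) by (apply pow_incr; nra).
  replace ((s * sin t) ^ 2) with (s * s * (1 - cos t * cos t)) by (rewrite <- E; ring).
  nra.
Qed.

Lemma angle_compose d a b c h s t : 0 < h ->
  dot d a a = h ^ 2 -> dot d b b = h ^ 2 -> dot d c c = h ^ 2 ->
  0 <= s -> 0 <= t -> s + t <= PI / 2 ->
  h ^ 2 * cos s <= dot d a b -> h ^ 2 * cos t <= dot d b c ->
  h ^ 2 * cos (s + t) <= dot d a c.
Proof.
  intros Hh Ha Hb Hc Hs Ht Hst Hab Hbc.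
  pose proof (angle_triangle d a b c ltac:(rewrite Hb; nra)) as Htri.
  rewrite Ha, Hb, Hc in Htri.
  pose proof (sine_from_cosine_bound (h ^ 2) (dot d a b) s ltac:(nra) ltac:(lra) Hab) as Sab.
  pose proof (sine_from_cosine_bound (h ^ 2) (dot d b c) t ltac:(nra) ltac:(lra) Hbc) as Sbc.
  pose proof (sqrt_pos (h ^ 2 * h ^ 2 - dot d a b ^ 2)).
  pose proof (sqrt_pos (h ^ 2 * h ^ 2 - dot d b c ^ 2)).
  assert (0 <= cos s) by (apply cos_ge_0; lra).
  assert (0 <= cos t) by (apply cos_ge_0; lra).
  assert (0 <= sin s) by (apply sin_ge_0; lra).
  assert (0 <= sin t) by (apply sin_ge_0; lra).
  assert (0 < h ^ 2) by nra.
  assert (Hcos : (h ^ 2 * cos s) * (h ^ 2 * cos t) <= dot d a b * dot d b c)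
    by (apply Rmult_le_compat; nra).
  assert (Hsin : sqrt (h ^ 2 * h ^ 2 - dot d a b ^ 2) * sqrt (h ^ 2 * h ^ 2 - dot d b c ^ 2)
                 <= (h ^ 2 * sin s) * (h ^ 2 * sin t)) by (apply Rmult_le_compat; nra).
  rewrite cos_plus.
  apply Rmult_le_reg_l with (h ^ 2); nra.
Qed.

Lemma normal_component_bound d a b w h r t : 0 < h -> 0 < r ->
  dot d a a = h ^ 2 -> dot d b b = h ^ 2 -> dot d w w = r ^ 2 -> dot d b w = 0 ->
  0 <= t <= PI / 2 -> h ^ 2 * cos t <= dot d a b ->
  - (r * h * sin t) <= dot d a w.
Proof.
  intros Hh Hr Ha Hb Hw Hbw Ht Hab.
  pose proof (bessel2 d a b w Hbw ltac:(rewrite Hb; nra) ltac:(rewrite Hw; nra)) as B.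
  rewrite Ha, Hb, Hw in B.
  assert (0 <= cos t) by (apply cos_ge_0; lra).
  assert (0 <= sin t) by (apply sin_ge_0; lra).
  pose proof (sin2_cos2 t) as E. unfold Rsqr in E.
  assert ((h ^ 2 * cos t) ^ 2 <= dot d a b ^ 2) by (apply pow_incr; nra).
  assert (h ^ 2 * dot d a w ^ 2 <= h ^ 2 * (r * h * sin t) ^ 2).
  { replace ((r * h * sin t) ^ 2) with (r ^ 2 * h ^ 2 * (1 - cos t * cos t))
      by (rewrite <- E; ring).
    nra. }
  assert (dot d a w ^ 2 <= (r * h * sin t) ^ 2) by (apply Rmult_le_reg_l with (h ^ 2); nra).
  assert (0 <= r * h * sin t) by (apply Rmult_le_pos; nra).
  nra.
Qed.

Lemma cos_le_of_acos_le z t : -1 <= z <= 1 -> acos z <= t -> t <= PI -> cos t <= z.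
Proof.
  intros Hz H1 H2. pose proof (acos_bound z).
  rewrite <- (cos_acos z Hz). apply cos_decr_1; lra.
Qed.

Lemma turning_angle_bound d ym y yp h K : 0 < h -> K * h <= PI ->
  vnorm d (vsub y ym) = h -> vnorm d (vsub yp y) = h -> kappa_d2 d ym y yp <= K ->
  h ^ 2 * cos (K * h) <= dot d (vsub y ym) (vsub yp y).
Proof.
  intros Hh HKh N1 N2 Hk.
  unfold kappa_d2, vangle in Hk.
  rewrite (vnorm_vsub_swap d ym y), N1, N2 in Hk.
  replace ((h + h) / 2) with h in Hk by field.
  set (q := dot d (vsub y ym) (vsub yp y)) in *.
  assert (Hangle : acos (q / (h * h)) <= K * h).
  { replace (acos (q / (h * h))) with (acos (q / (h * h)) / h * h) by (field; lra).
    apply Rmult_le_compat_r; lra. }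
  pose proof (cauchy_schwarz d (vsub y ym) (vsub yp y)) as CS.
  rewrite <- !vnorm_sq, N1, N2 in CS. fold q in CS.
  assert (0 < h * h) by nra.
  assert (Hz : -1 <= q / (h * h) <= 1).
  { split; apply Rmult_le_reg_r with (h * h); try lra;
      unfold Rdiv; rewrite Rmult_assoc, Rinv_l by lra; nra. }
  pose proof (cos_le_of_acos_le (q / (h * h)) (K * h) Hz Hangle HKh) as Hc.
  apply Rmult_le_compat_l with (r := h * h) in Hc; [|lra].
  replace (h * h * (q / (h * h))) with q in Hc by (field; lra).
  simpl. lra.
Qed.

Lemma outside_sphere d p0 p e c h r a b : 0 < h -> 0 < r ->
  dot d e e = h ^ 2 -> dot d (vsub p0 c) (vsub p0 c) = r ^ 2 -> dot d e (vsub p0 c) = 0 ->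
  h * a <= dot d (vsub p p0) e -> 0 <= a ->
  - (r * b) <= dot d (vsub p p0) (vsub p0 c) -> b <= r ->
  2 * r * b < a ^ 2 + b ^ 2 ->
  r < vnorm d (vsub p c).
Proof.
  intros Hh Hr He Hw Hew Htan Ha Hnor Hb Hab.
  set (w := vsub p0 c) in *.
  set (v := vsub p p0) in *.
  pose proof (bessel2 d v e w Hew ltac:(rewrite He; nra) ltac:(rewrite Hw; nra)) as B.
  rewrite He, Hw in B.
  assert (Hsplit : dot d (vsub p c) (vsub p c) = dot d v v + 2 * dot d v w + r ^ 2).
  { transitivity (dot d (fun i => 1 * v i + 1 * w i) (fun i => 1 * v i + 1 * w i)).
    - apply dot_ext; intros i; unfold v, w, vsub; ring.
    - rewrite dot_comb2, Hw; ring. }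
  set (S := dot d v e) in *. set (T := dot d v w) in *. set (Q := dot d v v) in *.
  (* Q >= a^2 + T^2 / r^2, and T + r^2 >= r (r - b) >= 0 *)
  assert ((h * a) ^ 2 <= S ^ 2) by (apply pow_incr; nra).
  assert (a ^ 2 * r ^ 2 + T ^ 2 <= Q * r ^ 2) by (apply Rmult_le_reg_l with (h ^ 2); nra).
  assert ((r * (r - b)) ^ 2 <= (T + r ^ 2) ^ 2) by (apply pow_incr; nra).
  assert (r ^ 2 * (2 * r * b) < r ^ 2 * (a ^ 2 + b ^ 2)) by (apply Rmult_lt_compat_l; nra).
  assert (Hgt : r ^ 2 < Q + 2 * T + r ^ 2) by (apply Rmult_lt_reg_r with (r ^ 2); nra).
  unfold vnorm. rewrite Hsplit.
  rewrite <- (sqrt_pow2 r) at 1 by lra.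
  apply sqrt_lt_1_alt. split; [nra | lra].
Qed.

(* The planar comparison polygon with edge length h and constant turning angle be,
   starting at the origin in direction (1, 0): its m-th vertex is
   (cmp_x h be m, cmp_y h be m). *)
Fixpoint cmp_x (h be : R) (m : nat) : R :=
  match m with O => 0 | S m' => cmp_x h be m' + h * cos (INR m' * be) end.
Fixpoint cmp_y (h be : R) (m : nat) : R :=
  match m with O => 0 | S m' => cmp_y h be m' + h * sin (INR m' * be) end.

Lemma cmp_x_closed h x m :
  sin x * cmp_x h (2 * x) m = h * sin (INR m * x) * cos ((INR m - 1) * x).
Proof.
  induction m as [|m IH].
  - simpl. rewrite Rmult_0_l, sin_0. ring.
  - cbn [cmp_x]. rewrite S_INR, Rmult_plus_distr_l, IH.
    replace ((INR m + 1 - 1) * x) with (INR m * x) by ring.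
    replace ((INR m + 1) * x) with (INR m * x + x) by ring.
    replace (INR m * (2 * x)) with (2 * (INR m * x)) by ring.
    replace ((INR m - 1) * x) with (INR m * x - x) by ring.
    rewrite sin_plus, cos_minus, cos_2a. ring.
Qed.

Lemma cmp_y_closed h x m :
  sin x * cmp_y h (2 * x) m = h * sin (INR m * x) * sin ((INR m - 1) * x).
Proof.
  induction m as [|m IH].
  - simpl. rewrite Rmult_0_l, sin_0. ring.
  - cbn [cmp_y]. rewrite S_INR, Rmult_plus_distr_l, IH.
    replace ((INR m + 1 - 1) * x) with (INR m * x) by ring.
    replace ((INR m + 1) * x) with (INR m * x + x) by ring.
    replace (INR m * (2 * x)) with (2 * (INR m * x)) by ring.
    replace ((INR m - 1) * x) with (INR m * x - x) by ring.
    rewrite sin_plus, sin_minus, sin_2a. ring.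
Qed.

(* tan x >= x on [0, pi/2], from the Taylor bounds sin x >= x - x^3/6 and
   cos x <= 1 - x^2/2 + x^4/24. *)
Lemma x_cos_le_sin x : 0 <= x <= PI / 2 -> x * cos x <= sin x.
Proof.
  intros Hx. pose proof PI_4 as HPI.
  destruct (sin_bound x 0 ltac:(lra) ltac:(lra)) as [Hs _].
  destruct (cos_bound x 0 ltac:(lra) ltac:(lra)) as [_ Hc].
  unfold sin_approx, cos_approx, sin_term, cos_term in Hs, Hc; simpl in Hs, Hc.
  assert (Hsin : x - x ^ 3 / 6 <= sin x) by (eapply Rle_trans; [| exact Hs]; right; field).
  assert (Hcos : cos x <= 1 - x ^ 2 / 2 + x ^ 4 / 24)
    by (eapply Rle_trans; [exact Hc |]; right; field).
  assert (x * cos x <= x * (1 - x ^ 2 / 2 + x ^ 4 / 24)) by (apply Rmult_le_compat_l; lra).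
  assert (0 <= x ^ 3 * (8 - x ^ 2)) by (apply Rmult_le_pos; [apply pow_le |]; nra).
  nra.
Qed.

Section ComparisonPolygon.
Variables (r x : R) (m : nat).
Hypotheses (Hr : 0 < r) (Hx : 0 < x) (Hm : (1 <= m)%nat) (HA : INR m * x <= PI / 4).

Lemma half_angle_range : 0 < sin x /\ x <= INR m * x /\ INR m * x <= PI / 4.
Proof.
  assert (1 <= INR m) by (apply (le_INR 1); exact Hm).
  pose proof PI2_3_2. repeat split; try nra.
  apply sin_gt_0; nra.
Qed.

Lemma cmp_x_nonneg : 0 <= cmp_x (2 * r * x) (2 * x) m.
Proof.
  destruct half_angle_range as (Hs & HxA & HA4).
  pose proof (cmp_x_closed (2 * r * x) x m) as E.
  replace ((INR m - 1) * x) with (INR m * x - x) in E by ring.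
  assert (0 <= sin (INR m * x)) by (apply sin_ge_0; lra).
  assert (0 <= cos (INR m * x - x)) by (apply cos_ge_0; lra).
  assert (0 <= sin x * cmp_x (2 * r * x) (2 * x) m)
    by (rewrite E; repeat apply Rmult_le_pos; lra).
  nra.
Qed.

Lemma cmp_y_le_radius : cmp_y (2 * r * x) (2 * x) m <= r.
Proof.
  destruct half_angle_range as (Hs & HxA & HA4).
  pose proof (cmp_y_closed (2 * r * x) x m) as E.
  set (A := INR m * x) in *.
  (* 2 sin A sin (A - x) = cos x - cos (2 A - x) <= cos x *)
  assert (Hprod : 2 * sin A * sin (A - x) = cos x - cos (2 * A - x)).
  { assert (E1 : cos x = cos (A - (A - x))) by (f_equal; ring).
    assert (E2 : cos (2 * A - x) = cos (A + (A - x))) by (f_equal; ring).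
    rewrite E1, E2, cos_plus, cos_minus. ring. }
  replace ((INR m - 1) * x) with (A - x) in E by (unfold A; ring).
  assert (0 <= cos (2 * A - x)) by (apply cos_ge_0; lra).
  pose proof (x_cos_le_sin x ltac:(lra)) as Htan.
  assert (sin x * cmp_y (2 * r * x) (2 * x) m <= sin x * r).
  { rewrite E.
    replace (2 * r * x * sin A * sin (A - x)) with (r * x * (2 * sin A * sin (A - x))) by ring.
    rewrite Hprod.
    assert (0 <= r * (sin x - x * cos x)) by (apply Rmult_le_pos; lra).
    assert (0 <= r * x * cos (2 * A - x)) by (apply Rmult_le_pos; nra).
    nra. }
  nra.
Qed.

(* The comparison vertex lies strictly outside the circle X^2 + Y^2 = 2 r Y:
   both sides scaled by sin^2 x reduce to x sin A > sin x sin (A - x). *)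
Lemma cmp_outside_circle :
  2 * r * cmp_y (2 * r * x) (2 * x) m
  < cmp_x (2 * r * x) (2 * x) m ^ 2 + cmp_y (2 * r * x) (2 * x) m ^ 2.
Proof.
  destruct half_angle_range as (Hs & HxA & HA4).
  pose proof (cmp_x_closed (2 * r * x) x m) as Ea.
  pose proof (cmp_y_closed (2 * r * x) x m) as Eb.
  set (a := cmp_x (2 * r * x) (2 * x) m) in *.
  set (b := cmp_y (2 * r * x) (2 * x) m) in *.
  set (A := INR m * x) in *.
  replace ((INR m - 1) * x) with (A - x) in Ea, Eb by (unfold A; ring).
  pose proof (sin2_cos2 (A - x)) as E1. unfold Rsqr in E1.
  assert (HsA : 0 < sin A) by (apply sin_gt_0; lra).
  assert (0 <= sin (A - x)) by (apply sin_ge_0; lra).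
  assert (sin (A - x) < sin A) by (apply sin_increasing_1; lra).
  assert (sin x < x) by (apply sin_lt_x; lra).
  assert (Key : sin x * sin (A - x) < x * sin A) by nra.
  assert (sin x ^ 2 * (2 * r * b) < sin x ^ 2 * (a ^ 2 + b ^ 2)).
  { replace (sin x ^ 2 * (2 * r * b)) with (2 * r * sin x * (sin x * b)) by ring.
    replace (sin x ^ 2 * (a ^ 2 + b ^ 2)) with ((sin x * a) ^ 2 + (sin x * b) ^ 2) by ring.
    assert (Ecirc : (2 * r * x * sin A * cos (A - x)) ^ 2 + (2 * r * x * sin A * sin (A - x)) ^ 2
                    = (2 * r) ^ 2 * x * sin A * (x * sin A)).
    { transitivity ((2 * r * x * sin A) ^ 2 * (sin (A - x) * sin (A - x) + cos (A - x) * cos (A - x)));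
        [ring | rewrite E1; ring]. }
    rewrite Ea, Eb, Ecirc.
    replace (2 * r * sin x * (2 * r * x * sin A * sin (A - x)))
      with ((2 * r) ^ 2 * x * sin A * (sin x * sin (A - x))) by ring.
    apply Rmult_lt_compat_l; [|lra].
    repeat apply Rmult_lt_0_compat; nra. }
  apply Rmult_lt_reg_l with (sin x ^ 2); nra.
Qed.

End ComparisonPolygon.

Definition edge (y : nat -> vec) (m : nat) : vec := vsub (y (S m)) (y m).

Section EquilateralPolygon.
Variables (d n : nat) (y : nat -> vec) (h beta r : R) (w : vec).
Hypotheses (Hh : 0 < h) (Hbeta : 0 <= beta) (Htotal : INR n * beta <= PI / 2).
Hypothesis edge_len : forall m, (m < n)%nat -> dot d (edge y m) (edge y m) = h ^ 2.
Hypothesis turn : forall m, (S m < n)%nat ->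
  h ^ 2 * cos beta <= dot d (edge y m) (edge y (S m)).
Hypotheses (Hr : 0 < r) (Hw : dot d w w = r ^ 2) (Horth : dot d (edge y 0) w = 0).

Lemma angle_range m : (m <= n)%nat -> 0 <= INR m * beta <= PI / 2.
Proof.
  intros Hm. assert (INR m <= INR n) by (apply le_INR; exact Hm).
  pose proof (pos_INR m). split; nra.
Qed.

Lemma edge_direction_bound m : (m < n)%nat ->
  h ^ 2 * cos (INR m * beta) <= dot d (edge y 0) (edge y m).
Proof.
  induction m as [|m IH]; intros Hm.
  - simpl. rewrite Rmult_0_l, cos_0, (edge_len 0 Hm). lra.
  - rewrite S_INR, Rmult_plus_distr_r, Rmult_1_l.
    destruct (angle_range m ltac:(lia)).
    destruct (angle_range (S m) ltac:(lia)) as [_ HS]. rewrite S_INR in HS.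
    apply angle_compose with (b := edge y m);
      [lra | apply edge_len; lia .. | lra | lra | nra | apply IH; lia | apply turn, Hm].
Qed.

Lemma edge_normal_bound m : (m < n)%nat -> - (r * h * sin (INR m * beta)) <= dot d (edge y m) w.
Proof.
  intros Hm.
  apply normal_component_bound with (b := edge y 0);
    [lra | lra | apply edge_len; lia .. | exact Hw | exact Horth
    | apply angle_range; lia | rewrite dot_sym; apply edge_direction_bound, Hm].
Qed.

Lemma vertex_bounds m : (m <= n)%nat ->
  h * cmp_x h beta m <= dot d (vsub (y m) (y 0%nat)) (edge y 0) /\
  - (r * cmp_y h beta m) <= dot d (vsub (y m) (y 0%nat)) w.
Proof.
  induction m as [|m IH]; intros Hm.
  - simpl. rewrite !dot_zero by (intros i; unfold vsub; ring). lra.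
  - assert (Ez : forall z, dot d (vsub (y (S m)) (y 0%nat)) z =
                 dot d (vsub (y m) (y 0%nat)) z + dot d (edge y m) z).
    { intros z. rewrite <- dot_addl. apply dot_ext; intros i; unfold edge, vsub; ring. }
    rewrite !Ez. cbn [cmp_x cmp_y].
    destruct (IH ltac:(lia)).
    pose proof (edge_direction_bound m ltac:(lia)).
    pose proof (edge_normal_bound m ltac:(lia)).
    rewrite (dot_sym d (edge y m)).
    split; nra.
Qed.

End EquilateralPolygon.

Lemma equilateral_edge_norm d n (y : nat -> vec) h :
  (forall k, (1 <= k <= n)%nat -> vnorm d (vsub (y k) (y (k - 1)%nat)) = h) ->
  forall m, (m < n)%nat -> vnorm d (edge y m) = h.
Proof.
  intros Hedge m Hm. rewrite <- (Hedge (S m)) by lia.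
  unfold edge. do 3 f_equal. lia.
Qed.

Lemma curvature_turn_bound d n (y : nat -> vec) h K : 0 < h -> K * h <= PI ->
  (forall m, (m < n)%nat -> vnorm d (edge y m) = h) -> maxCurv2_le d n y K ->
  forall m, (S m < n)%nat -> h ^ 2 * cos (K * h) <= dot d (edge y m) (edge y (S m)).
Proof.
  intros Hh HKh Hnorm Hcurv m Hm.
  pose proof (Hcurv (S m) ltac:(lia)) as Hk.
  replace (S m - 1)%nat with m in Hk by lia.
  replace (S m + 1)%nat with (S (S m)) in Hk by lia.
  apply turning_angle_bound; [exact Hh | exact HKh | apply Hnorm; lia .. | exact Hk].
Qed.

Theorem corollary7 (d n : nat) (y : nat -> vec) (L K : R) (c : vec) :
  0 < K ->
  (1 <= n)%nat ->
  0 < L ->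
  (forall k : nat, (1 <= k <= n)%nat ->
     vnorm d (vsub (y k) (y (k - 1)%nat)) = L / INR n) ->
  maxCurv2_le d n y K ->
  K * L <= PI / 2 ->
  vnorm d (vsub (y 0%nat) c) = 1 / K ->
  dot d (vsub (y 1%nat) (y 0%nat)) (vsub (y 0%nat) c) = 0 ->
  forall k : nat, (1 <= k <= n)%nat -> vnorm d (vsub (y k) c) > 1 / K.
Proof.
  intros HK Hn HL Hedge Hcurv HKL Hc0 Horth k Hk.
  assert (HnR : 1 <= INR n) by (apply (le_INR 1); exact Hn).
  set (h := L / INR n) in *. set (r := 1 / K) in *.
  assert (Hh : 0 < h) by (unfold h; apply Rdiv_lt_0_compat; lra).
  assert (Hr : 0 < r) by (unfold r; apply Rdiv_lt_0_compat; lra).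
  assert (HnKh : INR n * (K * h) = K * L) by (unfold h; field; lra).
  assert (HKh : 0 < K * h) by nra.
  assert (HkKh : INR k * (K * h) <= PI / 2).
  { assert (INR k <= INR n) by (apply le_INR; lia). nra. }
  pose proof (equilateral_edge_norm d n y h Hedge) as Hnorm.
  assert (Hlen : forall m, (m < n)%nat -> dot d (edge y m) (edge y m) = h ^ 2)
    by (intros m Hm; rewrite <- vnorm_sq, Hnorm; auto).
  pose proof (curvature_turn_bound d n y h K Hh ltac:(pose proof PI_RGT_0; nra) Hnorm Hcurv)
    as Hturn.
  assert (Hw : dot d (vsub (y 0%nat) c) (vsub (y 0%nat) c) = r ^ 2)
    by (rewrite <- vnorm_sq, Hc0; reflexivity).
  destruct (vertex_bounds d n y h (K * h) r (vsub (y 0%nat) c) Hh ltac:(nra) ltac:(lra)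
              Hlen Hturn Hr Hw Horth k ltac:(lia)) as [Htan Hnor].
  set (x := K * h / 2) in *.
  assert (Ex : K * h = 2 * x) by (unfold x; field).
  assert (Eh : 2 * r * x = h) by (unfold x, r; field; lra).
  rewrite Ex in Htan, Hnor, HkKh.
  pose proof (cmp_x_nonneg r x k Hr ltac:(nra) ltac:(lia) ltac:(lra)) as Hx0.
  pose proof (cmp_y_le_radius r x k Hr ltac:(nra) ltac:(lia) ltac:(lra)) as Hyr.
  pose proof (cmp_outside_circle r x k Hr ltac:(nra) ltac:(lia) ltac:(lra)) as Hout.
  rewrite Eh in Hx0, Hyr, Hout.
  apply Rlt_gt, (outside_sphere d (y 0%nat) (y k) (edge y 0) c h r
                   (cmp_x h (2 * x) k) (cmp_y h (2 * x) k)); auto.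
Qed.
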